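(* Let $\theta<\kappa$ be uncountable regular cardinals. The forcing $\mathbb P^-(\kappa,\theta)$ is $\theta^+$-directed closed.
   Context: $\mathrm{acc}(A)=\{\alpha\in A\mid\sup(A\cap\alpha)=\alpha>0\}$; $E^\kappa_{\ge\theta}$ is the set of ordinals below $\kappa$ of cofinality $\ge\theta$. $\mathbb P^-(\kappa,\theta)$ consists of all $p=\langle C^p_{\alpha,i}\mid\alpha\in\mathrm{acc}(\gamma^p+1),\ i(\alpha)^p\le i<\theta\rangle$ such that: (1) $\gamma^p\in\mathrm{acc}(\kappa)$; (2) for all $\alpha\in\mathrm{acc}(\gamma^p+1)$, $i(\alpha)^p<\theta$ and $\langle C^p_{\alpha,i}\mid i(\alpha)^p\le i<\theta\rangle$ is a $\subseteq$-increasing sequence of clubs in $\alpha$ with $\mathrm{acc}(\alpha)=\bigcup_i\mathrm{acc}(C^p_{\alpha,i})$; (3) for all $\alpha\in\mathrm{acc}(\gamma^p+1)$, $i(\alpha)^p\le i<\theta$ and $\bar\alpha\in\mathrm{acc}(C^p_{\alpha,i})\cap E^\kappa_{\ge\theta}$: $i(\bar\alpha)^p\le i$ and $C^p_{\bar\alpha,i}=C^p_{\alpha,i}\cap\bar\alpha$; (4) for all $\bar\alpha<\alpha$ in $\mathrm{acc}(\gamma^p+1)$ and all sufficiently large $i<\theta$, $C^p_{\bar\alpha,i}=C^p_{\alpha,i}\cap\bar\alpha$. It is ordered by end-extension. A poset is $\theta^+$-directed closed if every directed subset of size $<\theta^+$ has a lower bound. *)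

Set Implicit Arguments.

Section Ordinals.
Variables (K : Type) (lt : K -> K -> Prop).

Definition le (x y : K) : Prop := lt x y \/ x = y.

Definition is_wellorder : Prop :=
  (forall x, ~ lt x x) /\
  (forall x y z, lt x y -> lt y z -> lt x z) /\
  (forall x y, lt x y \/ x = y \/ lt y x) /\
  well_founded lt.

Definition seg (b : K) : Type := {x : K | lt x b}.

Definition unbounded_in (A : K -> Prop) (b : K) : Prop :=
  forall x, lt x b -> exists a, A a /\ le x a /\ lt a b.

Definition is_acc (A : K -> Prop) (b : K) : Prop :=
  (exists y, lt y b) /\
  forall x, lt x b -> exists a, A a /\ lt x a /\ lt a b.

Definition is_limit (b : K) : Prop := is_acc (fun _ => True) b.

Definition cf_lt (b t : K) : Prop :=
  exists c, lt c t /\ exists f : seg c -> K,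
    (forall x, lt (f x) b) /\ unbounded_in (fun a => exists x, f x = a) b.

(* kappa (= K itself) is an uncountable regular cardinal: cf(kappa) = kappa *)
Definition kappa_regular_uncountable : Prop :=
  ~ (exists (c : K) (f : seg c -> K), forall x, exists y, le x (f y)) /\
  ~ (exists g : K -> nat, forall x y, g x = g y -> x = y).

Definition regular_uncountable (t : K) : Prop :=
  ~ cf_lt t t /\
  ~ (exists g : seg t -> nat, forall x y, g x = g y -> x = y).

Definition club_in (C : K -> Prop) (b : K) : Prop :=
  (forall x, C x -> lt x b) /\ unbounded_in C b /\
  (forall x, lt x b -> is_acc C x -> C x).

(* A (potential) condition: gam = gamma^p, idx a = i(a)^p,
   clb a i = C^p_{a,i}; values outside the domain are irrelevant. *)
Record cond := mkCond { gam : K; idx : K -> K; clb : K -> K -> K -> Prop }.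

Definition dom (p : cond) (a : K) : Prop := is_limit a /\ le a (gam p).

Definition inP (t : K) (p : cond) : Prop :=
  is_limit (gam p) /\
  (forall a, dom p a ->
     lt (idx p a) t /\
     (forall i j, le (idx p a) i -> le i j -> lt j t ->
        forall x, clb p a i x -> clb p a j x) /\
     (forall i, le (idx p a) i -> lt i t -> club_in (clb p a i) a) /\
     (forall b, (is_limit b /\ lt b a) <->
        exists i, le (idx p a) i /\ lt i t /\ is_acc (clb p a i) b /\ lt b a)) /\
  (forall a i b, dom p a -> le (idx p a) i -> lt i t ->
     lt b a -> is_acc (clb p a i) b -> ~ cf_lt b t ->
     le (idx p b) i /\ (forall x, clb p b i x <-> (clb p a i x /\ lt x b))) /\
  (forall a b, dom p a -> dom p b -> lt b a ->
     exists i0, lt i0 t /\ forall i, le i0 i -> lt i t ->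
       le (idx p a) i -> le (idx p b) i ->
       forall x, clb p b i x <-> (clb p a i x /\ lt x b)).

(* q <= p : q end-extends p *)
Definition ext (t : K) (q p : cond) : Prop :=
  le (gam p) (gam q) /\
  forall a, dom p a ->
    idx q a = idx p a /\
    forall i, le (idx p a) i -> lt i t -> forall x, clb q a i x <-> clb p a i x.

Definition directed (t : K) (D : cond -> Prop) : Prop :=
  (forall p, D p -> inP t p) /\
  forall p q, D p -> D q -> exists r, D r /\ ext t r p /\ ext t r q.

(* P^-(kappa,theta) is theta^+-directed closed: every directed subset of
   size < theta^+ (i.e. injecting into theta) has a lower bound in P^- *)
Definition thetaplus_directed_closed (t : K) : Prop :=
  forall D : cond -> Prop, directed t D ->
    (exists f : {p : cond | D p} -> seg t, forall x y, f x = f y -> x = y) ->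
    exists r, inP t r /\ forall p, D p -> ext t r p.

End Ordinals.

(* If the heights gamma^p of the conditions in D have a maximum, that condition is a lower
   bound. Otherwise let gsup be their supremum (below kappa, as kappa is regular). Directedness
   makes the conditions agree wherever they overlap, so they glue to a coherent system below
   gsup, and only the clubs C_{gsup,i} remain to be found. Enumerate D as (p_e)_{e<theta};
   since theta is regular, for each e there is a stage thr e < theta from which on the clubs at
   gamma e cohere with those at all earlier gamma z. At stage i take the union of the clubs at
   gamma e for the e active at i (e, thr e < i), and add the suprema delta k of the active
   heights of all later stages k. Coherence makes this closed below each active gamma e, the
   points delta k close it at the top, and an accumulation point above all active heights is a
   supremum of fewer than theta ordinals, so clause (3) never applies to it. *)

From Stdlib Require Import Classical ClassicalEpsilon ProofIrrelevance.
Set Implicit Arguments.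

Section Ordinals.
Variables (K : Type) (lt : K -> K -> Prop).
Hypothesis lt_wo : is_wellorder lt.
Variable inhK : inhabited K.

Local Notation "x <. y" := (lt x y) (at level 70).
Local Notation "x <=. y" := (le lt x y) (at level 70).

Lemma lt_irrefl x : ~ x <. x.
Proof. apply lt_wo. Qed.

Lemma lt_trans x y z : x <. y -> y <. z -> x <. z.
Proof. apply lt_wo. Qed.

Lemma lt_total x y : x <. y \/ x = y \/ y <. x.
Proof. apply lt_wo. Qed.

Lemma le_refl x : x <=. x.
Proof. now right. Qed.

Lemma lt_le_incl x y : x <. y -> x <=. y.
Proof. now left. Qed.

Lemma lt_le_trans x y z : x <. y -> y <=. z -> x <. z.
Proof. intros H [H' | <-]; eauto using lt_trans. Qed.

Lemma le_lt_trans x y z : x <=. y -> y <. z -> x <. z.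
Proof. intros [H | ->] H'; eauto using lt_trans. Qed.

Lemma le_trans x y z : x <=. y -> y <=. z -> x <=. z.
Proof. intros H [H' | <-]; [left; eauto using le_lt_trans | exact H]. Qed.

Lemma le_not_lt x y : x <=. y -> ~ y <. x.
Proof. intros H H'. exact (lt_irrefl (le_lt_trans H H')). Qed.

Lemma lt_asymm x y : x <. y -> ~ y <. x.
Proof. intro H. apply le_not_lt, lt_le_incl, H. Qed.

Lemma not_lt_le x y : ~ x <. y -> y <=. x.
Proof. intro H. destruct (lt_total x y) as [? | [-> | ?]]; [contradiction | apply le_refl | now left]. Qed.

Lemma not_le_lt x y : ~ x <=. y -> y <. x.
Proof. intro H. destruct (lt_total x y) as [? | [-> | ?]]; auto; exfalso; apply H; [now left | apply le_refl]. Qed.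

Lemma le_antisym x y : x <=. y -> y <=. x -> x = y.
Proof. intros [H | ?] H'; [exfalso; exact (le_not_lt H' H) | assumption]. Qed.

Lemma max_in (P : K -> Prop) {x y : K} : P x -> P y -> exists z, P z /\ x <=. z /\ y <=. z.
Proof.
  intros Hx Hy. destruct (lt_total x y) as [H | [-> | H]].
  - exists y. auto using lt_le_incl, le_refl.
  - exists y. auto using le_refl.
  - exists x. auto using lt_le_incl, le_refl.
Qed.

Lemma well_founded_min {P : K -> Prop} :
  (exists x, P x) -> exists x, P x /\ forall y, P y -> x <=. y.
Proof.
  intros [x Hx]. induction x as [x IH] using (well_founded_ind (proj2 (proj2 (proj2 lt_wo)))).
  destruct (classic (exists y, P y /\ y <. x)) as [[y [Hy Hyx]] | Hmin]; [now apply (IH y) |].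
  exists x. split; [exact Hx |]. intros y Hy. apply not_lt_le. intro. apply Hmin; eauto.
Qed.

Lemma is_acc_limit (A : K -> Prop) b : is_acc lt A b -> is_limit lt b.
Proof.
  intros [Hne H]. split; [exact Hne |]. intros x Hx. destruct (H x Hx) as [a [_ Ha]]. eauto.
Qed.

Lemma is_acc_mono (A B : K -> Prop) b :
  (forall x, A x -> B x) -> is_acc lt A b -> is_acc lt B b.
Proof.
  intros HAB [Hne H]. split; [exact Hne |]. intros x Hx. destruct (H x Hx) as [a [Ha Hxa]]. eauto.
Qed.

Lemma is_acc_restrict (A B : K -> Prop) b :
  (forall x, x <. b -> A x -> B x) -> is_acc lt A b -> is_acc lt B b.
Proof.
  intros HAB [Hne H]. split; [exact Hne |]. intros x Hx.
  destruct (H x Hx) as [a [Ha [Hxa Hab]]]. eauto.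
Qed.

Lemma limit_between b x : is_limit lt b -> x <. b -> exists y, x <. y /\ y <. b.
Proof. intros [_ H] Hx. destruct (H x Hx) as [a [_ Ha]]. eauto. Qed.

Lemma club_is_acc (C : K -> Prop) b : is_limit lt b -> club_in lt C b -> is_acc lt C b.
Proof.
  intros Hb [_ [Hunb _]]. split; [exact (proj1 Hb) |]. intros x Hx.
  destruct (limit_between Hb Hx) as [y [Hxy Hyb]]. destruct (Hunb y Hyb) as [a [Ha [Hya Hab]]].
  exists a. eauto using lt_le_trans.
Qed.

Definition least (P : K -> Prop) : K :=
  epsilon inhK (fun x => P x /\ forall y, P y -> x <=. y).

Lemma least_spec {P : K -> Prop} :
  (exists x, P x) -> P (least P) /\ forall y, P y -> least P <=. y.
Proof.
  intro H. apply (epsilon_spec inhK (fun x => P x /\ forall y, P y -> x <=. y)).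
  exact (well_founded_min H).
Qed.

Definition sup (I : Type) (P : I -> Prop) (f : I -> K) : K :=
  least (fun u => forall j, P j -> f j <=. u).

Section Sup.
Context {I : Type} {P : I -> Prop} {f : I -> K}.
Hypothesis bounded : exists u, forall j, P j -> f j <=. u.

Lemma sup_ub {j} : P j -> f j <=. sup P f.
Proof. apply (least_spec bounded). Qed.

Lemma sup_least u : (forall j, P j -> f j <=. u) -> sup P f <=. u.
Proof. apply (least_spec bounded). Qed.

Lemma lt_sup {y} : y <. sup P f -> exists j, P j /\ y <. f j.
Proof.
  intro Hy. apply NNPP. intro Hn. refine (le_not_lt (sup_least (u := y) _) Hy).
  intros j Hj. apply not_lt_le. eauto.
Qed.

End Sup.

Lemma cf_lt_of_cofinal_family t b c (Q : K -> Prop) (f : K -> K) :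
  c <. t -> (forall z, Q z -> z <. c) -> (exists z, Q z) ->
  (forall z, Q z -> f z <. b) -> (forall y, y <. b -> exists z, Q z /\ y <=. f z) ->
  cf_lt lt b t.
Proof.
  intros Hct HQc [z0 Hz0] Hfb Hcof. exists c. split; [exact Hct |].
  exists (fun z => if excluded_middle_informative (Q (proj1_sig z)) then f (proj1_sig z) else f z0).
  split.
  - intros [z Hz]. simpl. destruct excluded_middle_informative; auto.
  - intros y Hy. destruct (Hcof y Hy) as [z [Hz Hyz]].
    exists (f z). split; [| split; auto].
    exists (exist _ z (HQc z Hz)). simpl. now destruct excluded_middle_informative.
Qed.

Lemma seg_eq b (u v : seg lt b) : proj1_sig u = proj1_sig v -> u = v.
Proof. destruct u, v. simpl. intros ->. f_equal. apply proof_irrelevance. Qed.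

Lemma enumerate_injective (A : Type) (D : A -> Prop) t (g : {x | D x} -> seg lt t) a0 :
  (forall x y, g x = g y -> x = y) -> D a0 ->
  exists pe : K -> A, (forall e, D (pe e)) /\ forall p, D p -> exists e, e <. t /\ pe e = p.
Proof.
  intros Hg Ha0.
  set (code (p : A) (Hp : D p) := proj1_sig (g (exist _ p Hp))).
  destruct (choice (fun e p => D p /\ forall q (Hq : D q), code q Hq = e -> p = q))
    as [pe Hpe].
  { intro e. destruct (classic (exists q (Hq : D q), code q Hq = e)) as [[q [Hq <-]] | Hn].
    - exists q. split; [exact Hq |]. intros q' Hq' Hcode.
      assert (Heq : g (exist _ q Hq) = g (exist _ q' Hq')).
      { apply seg_eq. symmetry. exact Hcode. }
      exact (f_equal (@proj1_sig _ _) (Hg _ _ Heq)).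
    - exists a0. split; [exact Ha0 |]. intros q Hq Hcode. exfalso. eauto. }
  exists pe. split; [intro e; apply Hpe |]. intros p Hp. exists (code p Hp). split.
  - exact (proj2_sig (g (exist _ p Hp))).
  - exact (proj2 (Hpe _) p Hp eq_refl).
Qed.

Section Theta.
Variable theta : K.
Hypothesis theta_regular : regular_uncountable lt theta.

Lemma theta_nonempty : exists y, y <. theta.
Proof.
  apply NNPP. intro Hn. apply (proj2 theta_regular).
  exists (fun _ => 0). intros [x Hx]. exfalso. eauto.
Qed.

Lemma theta_limit : is_limit lt theta.
Proof.
  split; [exact theta_nonempty |]. intros x Hx. apply NNPP. intro Hn.
  assert (Hmax : forall y, y <. theta -> y <=. x).
  { intros y Hy. apply not_lt_le. intro Hxy. apply Hn. eauto. }
  destruct (classic (exists z, z <. x)) as [[z Hz] | Hnz].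
  - (* theta = x + 1 would have cofinality 1 *)
    apply (proj1 theta_regular).
    apply (cf_lt_of_cofinal_family (c := x) (fun z' => z' = z) (fun _ => x)); eauto.
    now intros z' ->.
  - (* theta = 1 injects into nat *)
    apply (proj2 theta_regular). exists (fun _ => 0). intros [y Hy] [y' Hy'] _.
    assert (Hyx : forall w, w <. theta -> w = x).
    { intros w Hw. destruct (Hmax w Hw) as [H | H]; [exfalso; eauto | exact H]. }
    pose proof (Hyx y Hy). pose proof (Hyx y' Hy'). subst. f_equal. apply proof_irrelevance.
Qed.

Lemma above_two x y : x <. theta -> y <. theta -> exists i, x <. i /\ y <. i /\ i <. theta.
Proof.
  intros Hx Hy. destruct (max_in (fun z => z <. theta) Hx Hy) as [z [Hz [Hxz Hyz]]].
  destruct (limit_between theta_limit Hz) as [i [Hzi Hi]].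
  exists i. eauto using le_lt_trans.
Qed.

Lemma regular_bound c (F : seg lt c -> K) :
  c <. theta -> (forall z, F z <. theta) -> exists m, m <. theta /\ forall z, F z <. m.
Proof.
  intros Hc HF. apply NNPP. intro Hn. apply (proj1 theta_regular).
  exists c. split; [exact Hc |]. exists F. split; [exact HF |]. intros m Hm.
  apply NNPP. intro Hn2. apply Hn. exists m. split; [exact Hm |]. intro z.
  apply not_le_lt. intro Hle. apply Hn2. exists (F z). eauto.
Qed.

Lemma regular_uniform_bound c (P : seg lt c -> K -> Prop) :
  c <. theta ->
  (forall z, exists v, v <. theta /\ forall i, v <=. i -> i <. theta -> P z i) ->
  exists m, m <. theta /\ forall z i, m <=. i -> i <. theta -> P z i.
Proof.
  intros Hc HP. destruct (choice _ HP) as [v Hv].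
  destruct (regular_bound v Hc (fun z => proj1 (Hv z))) as [m [Hm Hvm]].
  exists m. split; [exact Hm |]. intros z i Hmi Hi.
  apply (proj2 (Hv z)); [apply lt_le_incl; eauto using lt_le_trans | exact Hi].
Qed.

End Theta.

Section Conditions.
Variable theta : K.

Lemma inP_inhabited : is_limit lt theta -> exists r, inP lt theta r.
Proof.
  intro Htheta. destruct (proj1 Htheta) as [i0 Hi0].
  destruct (well_founded_min (ex_intro _ theta Htheta)) as [om [Hom Homl]].
  assert (Hdom : forall a, is_limit lt a -> a <=. om -> a = om).
  { intros a Ha Hle. apply le_antisym; auto. }
  assert (Hnb : forall b, is_limit lt b -> ~ b <. om).
  { intros b Hb. apply le_not_lt, Homl, Hb. }
  (* the least limit ordinal has no limit ordinals below it, so its trivial clubs cohere vacuously *)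
  exists (mkCond om (fun _ => i0) (fun a i x => x <. a)).
  unfold inP, dom; simpl. split; [exact Hom | split; [| split]].
  - intros a [Ha Hle]. rewrite (Hdom a Ha Hle).
    split; [exact Hi0 | split; [auto | split]].
    + intros i _ _. split; [auto | split]; [| auto].
      intros x Hx. exists x. auto using le_refl.
    + intro b. split.
      * intros [Hb Hbo]. exfalso. exact (Hnb b Hb Hbo).
      * intros [i [_ [_ [Hacc Hbo]]]]. exfalso. exact (Hnb b (is_acc_limit Hacc) Hbo).
  - intros a i b [Ha Hle] _ _ Hba Hacc _. exfalso. rewrite (Hdom a Ha Hle) in Hba.
    exact (Hnb b (is_acc_limit Hacc) Hba).
  - intros a b [Ha Hle] [Hb Hleb] Hba. exfalso.
    rewrite (Hdom a Ha Hle), (Hdom b Hb Hleb) in Hba. exact (lt_irrefl Hba).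
Qed.

Variable D : cond K -> Prop.
Hypothesis D_directed : directed lt theta D.

Lemma directed_agree p q a : D p -> D q -> dom lt p a -> dom lt q a ->
  idx p a = idx q a /\
  forall i, idx q a <=. i -> i <. theta -> forall x, clb p a i x <-> clb q a i x.
Proof.
  intros Hp Hq Hdp Hdq. destruct (proj2 D_directed p q Hp Hq) as [s [_ [[_ Hsp] [_ Hsq]]]].
  destruct (Hsp a Hdp) as [Ep Cp]. destruct (Hsq a Hdq) as [Eq Cq].
  assert (E : idx p a = idx q a) by congruence. split; [exact E |].
  intros i Hi Ht x. rewrite <- (Cp i), <- (Cq i); try rewrite E; tauto.
Qed.

Lemma directed_max_lower_bound p : D p -> (forall q, D q -> gam q <=. gam p) ->
  inP lt theta p /\ forall q, D q -> ext lt theta p q.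
Proof.
  intros Hp Hmax. split; [exact (proj1 D_directed p Hp) |].
  intros q Hq. split; [exact (Hmax q Hq) |]. intros a [Hal Haq].
  assert (Hdp : dom lt p a) by (split; eauto using le_trans).
  exact (directed_agree Hp Hq Hdp (conj Hal Haq)).
Qed.

End Conditions.

Section LowerBound.
Variable theta : K.
Hypothesis theta_regular : regular_uncountable lt theta.
Hypothesis kappa_regular : kappa_regular_uncountable lt.
Variable D : cond K -> Prop.
Hypothesis D_directed : directed lt theta D.
Variable pe : K -> cond K.
Hypothesis pe_in : forall e, D (pe e).
Hypothesis pe_onto : forall p, D p -> exists e, e <. theta /\ pe e = p.
Hypothesis no_max : forall p, D p -> exists q, D q /\ gam p <. gam q.

Definition gamma e := gam (pe e).

Lemma D_inP p : D p -> inP lt theta p.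
Proof. apply D_directed. Qed.

Lemma gam_bounded : exists u, forall p, D p -> gam p <=. u.
Proof.
  apply NNPP. intro Hn. apply (proj1 kappa_regular).
  exists theta, (fun z => gamma (proj1_sig z)). intro x.
  assert (Hx : exists p, D p /\ x <. gam p).
  { apply NNPP. intro Hn2. apply Hn. exists x. intros p Hp. apply not_lt_le. eauto. }
  destruct Hx as [p [Hp Hxp]]. destruct (pe_onto Hp) as [e [He <-]].
  exists (exist _ e He). now left.
Qed.

Definition gsup := sup D (@gam K).

Lemma gam_lt_gsup p : D p -> gam p <. gsup.
Proof.
  intro Hp. destruct (no_max Hp) as [q [Hq Hpq]].
  exact (lt_le_trans Hpq (sup_ub gam_bounded Hq)).
Qed.

Lemma gamma_lt_gsup e : gamma e <. gsup.
Proof. apply gam_lt_gsup, pe_in. Qed.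

Lemma gamma_limit e : is_limit lt (gamma e).
Proof. apply (D_inP (pe_in e)). Qed.

Lemma lt_gsup x : x <. gsup -> exists e, e <. theta /\ x <. gamma e.
Proof.
  intro Hx. destruct (lt_sup gam_bounded Hx) as [p [Hp Hxp]].
  destruct (pe_onto Hp) as [e [He <-]]. eauto.
Qed.

Lemma gsup_limit : is_limit lt gsup.
Proof.
  destruct (theta_nonempty theta_regular) as [e _].
  split; [exists (gamma e); apply gamma_lt_gsup |].
  intros x Hx. destruct (lt_gsup Hx) as [e' [_ Hxe]]. exists (gamma e').
  auto using gamma_lt_gsup.
Qed.

(* All members of D reaching a agree at a, so any one of them determines the clubs there. *)
Definition cover a := pe (least (fun e => a <=. gamma e)).

Lemma cover_dom a : is_limit lt a -> a <. gsup -> dom lt (cover a) a.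
Proof.
  intros Ha Hag. split; [exact Ha |]. apply (least_spec (P := fun e => a <=. gamma e)).
  destruct (lt_gsup Hag) as [e [_ Hae]]. exists e. now left.
Qed.

Definition gidx a := idx (cover a) a.
Definition gclub a i := clb (cover a) a i.

Lemma gsystem_agree p a : D p -> dom lt p a ->
  gidx a = idx p a /\ forall i, idx p a <=. i -> i <. theta -> forall x, gclub a i x <-> clb p a i x.
Proof.
  intros Hp [Ha Hap]. apply (directed_agree D_directed (pe_in _) Hp); [| split; assumption].
  apply cover_dom; [exact Ha |]. exact (le_lt_trans Hap (gam_lt_gsup Hp)).
Qed.

Definition coherent i b a := forall x, gclub b i x <-> gclub a i x /\ x <. b.

Section BelowSup.
Variable a : K.
Hypotheses (a_limit : is_limit lt a) (a_lt_gsup : a <. gsup).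

Let cover_clauses := D_inP (pe_in (least (fun e => a <=. gamma e))).
Let a_dom := cover_dom a_limit a_lt_gsup.

Lemma gidx_lt_theta : gidx a <. theta.
Proof. apply (proj1 (proj2 cover_clauses) a a_dom). Qed.

Lemma gclub_mono {i j x} : gidx a <=. i -> i <=. j -> j <. theta -> gclub a i x -> gclub a j x.
Proof. intros Hi Hij Hj. revert x. apply (proj1 (proj2 cover_clauses) a a_dom); assumption. Qed.

Lemma gclub_club i : gidx a <=. i -> i <. theta -> club_in lt (gclub a i) a.
Proof. apply (proj1 (proj2 cover_clauses) a a_dom). Qed.

Lemma gclub_acc b : is_limit lt b -> b <. a ->
  exists i, gidx a <=. i /\ i <. theta /\ is_acc lt (gclub a i) b.
Proof.
  intros Hb Hba. destruct (proj1 (proj2 cover_clauses) a a_dom) as [_ [_ [_ Hacc]]].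
  destruct (proj1 (Hacc b) (conj Hb Hba)) as [i [? [? [? _]]]]. eauto.
Qed.

Lemma gclub_coherent_acc i b : gidx a <=. i -> i <. theta -> b <. a ->
  is_acc lt (gclub a i) b -> ~ cf_lt lt b theta -> gidx b <=. i /\ coherent i b a.
Proof.
  intros Hi Ht Hba Hacc Hcf.
  destruct (proj1 (proj2 (proj2 cover_clauses)) a i b a_dom Hi Ht Hba Hacc Hcf) as [Hib Hcoh].
  assert (Hbdom : dom lt (cover a) b).
  { split; [exact (is_acc_limit Hacc) | exact (lt_le_incl (lt_le_trans Hba (proj2 a_dom)))]. }
  destruct (gsystem_agree (pe_in _) Hbdom) as [E C].
  split; [rewrite E; exact Hib |]. intro x. rewrite (C i Hib Ht). apply Hcoh.
Qed.

Lemma gclub_coherent_eventually b : is_limit lt b -> b <. a ->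
  exists i0, i0 <. theta /\ forall i, i0 <=. i -> i <. theta -> gidx a <=. i -> gidx b <=. i ->
    coherent i b a.
Proof.
  intros Hb Hba.
  assert (Hbdom : dom lt (cover a) b).
  { split; [exact Hb | exact (lt_le_incl (lt_le_trans Hba (proj2 a_dom)))]. }
  destruct (proj2 (proj2 (proj2 cover_clauses)) a b a_dom Hbdom Hba) as [i0 [Hi0 Hcoh]].
  destruct (gsystem_agree (pe_in _) Hbdom) as [E C].
  exists i0. split; [exact Hi0 |]. intros i Hi Ht Hia Hib x.
  rewrite E in Hib. rewrite (C i Hib Ht). apply Hcoh; assumption.
Qed.

End BelowSup.

Definition coherent_pair i a b := (a <. b -> coherent i a b) /\ (b <. a -> coherent i b a).

Lemma coherent_pair_eventually a b :
  is_limit lt a -> a <. gsup -> is_limit lt b -> b <. gsup ->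
  exists v, v <. theta /\ forall i, v <=. i -> i <. theta -> gidx a <=. i -> gidx b <=. i ->
    coherent_pair i a b.
Proof.
  intros Ha Hag Hb Hbg. destruct (lt_total a b) as [Hab | [<- | Hba]].
  - destruct (gclub_coherent_eventually Hb Hbg Ha Hab) as [v [Hv Hcoh]].
    exists v. split; [exact Hv |]. intros i Hvi Hi Hia Hib.
    split; [intros _; auto | intro Hba; exfalso; exact (lt_asymm Hab Hba)].
  - destruct (theta_nonempty theta_regular) as [v Hv].
    exists v. split; [exact Hv |]. intros. split; intro Haa; exfalso; exact (lt_irrefl Haa).
  - destruct (gclub_coherent_eventually Ha Hag Hb Hba) as [v [Hv Hcoh]].
    exists v. split; [exact Hv |]. intros i Hvi Hi Hia Hib.
    split; [intro Hab; exfalso; exact (lt_asymm Hab Hba) | intros _; auto].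
Qed.

Definition is_threshold e m := m <. theta /\ gidx (gamma e) <=. m /\
  forall z i, z <. e -> m <=. i -> i <. theta -> gidx (gamma z) <=. i ->
    coherent_pair i (gamma z) (gamma e).

Lemma threshold_exists e : e <. theta -> exists m, is_threshold e m.
Proof.
  intro He.
  destruct (regular_uniform_bound theta_regular
              (fun z i => gidx (gamma (proj1_sig z)) <=. i -> gidx (gamma e) <=. i ->
                          coherent_pair i (gamma (proj1_sig z)) (gamma e)) He)
    as [m0 [Hm0 Hm0_spec]].
  { intro z. destruct (coherent_pair_eventually (gamma_limit (proj1_sig z)) (gamma_lt_gsup _)
                         (gamma_limit e) (gamma_lt_gsup e)) as [v [Hv Hcoh]].
    exists v. split; [exact Hv |]. intros i Hvi Hi Hiz Hie. exact (Hcoh i Hvi Hi Hiz Hie). }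
  pose proof (gidx_lt_theta (gamma_limit e) (gamma_lt_gsup e)) as He_idx.
  destruct (max_in (fun x => x <. theta) Hm0 He_idx) as [m [Hm [Hm0m Hidxm]]].
  exists m. split; [exact Hm | split; [exact Hidxm |]]. intros z i Hz Hmi Hi Hiz.
  exact (Hm0_spec (exist _ z Hz) i (le_trans Hm0m Hmi) Hi Hiz (le_trans Hidxm Hmi)).
Qed.

Definition thr e := least (is_threshold e).

Lemma thr_spec e : e <. theta -> is_threshold e (thr e).
Proof. intro He. apply (least_spec (threshold_exists He)). Qed.

Definition active i e := e <. i /\ thr e <. i.

Lemma active_mono i j e : i <=. j -> active i e -> active j e.
Proof. intros Hij [He Ht]. split; eauto using lt_le_trans. Qed.

Lemma active_lt_theta i e : i <. theta -> active i e -> e <. theta.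
Proof. intros Hi [He _]. eauto using lt_trans. Qed.

Lemma gidx_le_active i e : i <. theta -> active i e -> gidx (gamma e) <=. i.
Proof.
  intros Hi Hact. destruct (thr_spec (active_lt_theta Hi Hact)) as [_ [Hidx _]].
  exact (le_trans Hidx (lt_le_incl (proj2 Hact))).
Qed.

Lemma active_coherent i e z : i <. theta -> active i e -> active i z ->
  gamma z <. gamma e -> coherent i (gamma z) (gamma e).
Proof.
  intros Hi He Hz Hlt. destruct (lt_total z e) as [Hze | [-> | Hez]].
  - destruct (thr_spec (active_lt_theta Hi He)) as [_ [_ Hcoh]].
    apply (Hcoh z i Hze (lt_le_incl (proj2 He)) Hi (gidx_le_active Hi Hz)). exact Hlt.
  - exfalso. exact (lt_irrefl Hlt).
  - destruct (thr_spec (active_lt_theta Hi Hz)) as [_ [_ Hcoh]].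
    apply (Hcoh e i Hez (lt_le_incl (proj2 Hz)) Hi (gidx_le_active Hi He)). exact Hlt.
Qed.

Lemma active_above e i : e <. theta -> i <. theta ->
  exists k, active k e /\ i <=. k /\ k <. theta.
Proof.
  intros He Hi. destruct (max_in (fun x => x <. theta) Hi He) as [m [Hm [Him Hem]]].
  destruct (above_two theta_regular Hm (proj1 (thr_spec He))) as [k [Hmk [Htk Hk]]].
  exists k. split; [split; eauto using le_lt_trans | split; eauto using le_trans, lt_le_incl].
Qed.

Lemma gclub_active_mono {i j e x} : i <=. j -> j <. theta -> active i e ->
  gclub (gamma e) i x -> gclub (gamma e) j x.
Proof.
  intros Hij Hj Hact. apply gclub_mono; eauto using gamma_limit, gamma_lt_gsup.
  apply gidx_le_active; eauto using le_lt_trans.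
Qed.

Lemma gclub_active_club i e : i <. theta -> active i e -> club_in lt (gclub (gamma e) i) (gamma e).
Proof.
  intros Hi Hact. apply gclub_club; auto using gamma_limit, gamma_lt_gsup, gidx_le_active.
Qed.

Lemma gclub_active_lt {i e x} : i <. theta -> active i e -> gclub (gamma e) i x -> x <. gamma e.
Proof. intros Hi Hact. apply (gclub_active_club Hi Hact). Qed.

Definition delta k := sup (active k) gamma.

Lemma active_bounded k : exists u, forall e, active k e -> gamma e <=. u.
Proof. exists gsup. intros e _. apply lt_le_incl, gamma_lt_gsup. Qed.

Lemma delta_ub k e : active k e -> gamma e <=. delta k.
Proof. apply (sup_ub (active_bounded k)). Qed.

Lemma delta_least k u : (forall e, active k e -> gamma e <=. u) -> delta k <=. u.
Proof. apply (sup_least (active_bounded k)). Qed.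

Lemma lt_delta {k y} : y <. delta k -> exists e, active k e /\ y <. gamma e.
Proof. apply (lt_sup (active_bounded k)). Qed.

Lemma delta_le_gsup k : delta k <=. gsup.
Proof. apply delta_least. intros e _. apply lt_le_incl, gamma_lt_gsup. Qed.

Lemma delta_mono k k' : k <=. k' -> delta k <=. delta k'.
Proof. intro Hk. apply delta_least. intros e He. apply delta_ub. exact (active_mono Hk He). Qed.

Lemma delta_above x i : x <. gsup -> i <. theta ->
  exists k, i <=. k /\ k <. theta /\ (exists e, active k e) /\ x <. delta k.
Proof.
  intros Hx Hi. destruct (lt_gsup Hx) as [e [He Hxe]].
  destruct (active_above He Hi) as [k [Hk [Hik Hkt]]].
  exists k. split; [exact Hik | split; [exact Hkt | split; [eauto |]]].
  exact (lt_le_trans Hxe (delta_ub Hk)).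
Qed.

Lemma active_gamma_in_gclub i z e : i <. theta -> active i z -> active i e ->
  gamma z <. gamma e -> gclub (gamma e) i (gamma z).
Proof.
  intros Hi Hz He Hlt. apply (gclub_active_club Hi He); [exact Hlt |].
  apply (is_acc_restrict (A := gclub (gamma z) i)).
  - intros x _ Hx. exact (proj1 (proj1 (active_coherent Hi He Hz Hlt x) Hx)).
  - exact (club_is_acc (gamma_limit z) (gclub_active_club Hi Hz)).
Qed.

Lemma delta_in_gclub i k : k <=. i -> i <. theta -> (exists e, active k e) ->
  delta k <. delta i -> exists e, active i e /\ gclub (gamma e) i (delta k).
Proof.
  intros Hki Hi [e0 He0] Hlt. destruct (lt_delta Hlt) as [e [He Hke]].
  exists e. split; [exact He |].
  destruct (classic (exists z, active k z /\ gamma z = delta k)) as [[z [Hz Hzk]] | Hn].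
  - rewrite <- Hzk in *. exact (active_gamma_in_gclub Hi (active_mono Hki Hz) He Hke).
  - (* delta k is not attained, so it is a limit of gamma z's lying in the club *)
    apply (gclub_active_club Hi He); [exact Hke |].
    assert (Hstrict : forall z, active k z -> gamma z <. delta k).
    { intros z Hz. destruct (delta_ub Hz) as [? | ?]; [assumption | exfalso; eauto]. }
    split; [exists (gamma e0); auto |].
    intros y Hy. destruct (lt_delta Hy) as [z [Hz Hyz]]. exists (gamma z).
    split; [| auto].
    apply (active_gamma_in_gclub Hi (active_mono Hki Hz) He). eauto using lt_trans.
Qed.

Definition Ctop i x :=
  (exists e, active i e /\ gclub (gamma e) i x) \/
  (x <. gsup /\ exists k, i <=. k /\ k <. theta /\ (exists e, active k e) /\ x = delta k).

Lemma Ctop_lt i x : i <. theta -> Ctop i x -> x <. gsup.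
Proof.
  intros Hi [[e [He Hx]] | [Hx _]]; [| exact Hx].
  exact (lt_trans (gclub_active_lt Hi He Hx) (gamma_lt_gsup e)).
Qed.

Lemma Ctop_agree i e x : i <. theta -> active i e -> x <. gamma e ->
  (Ctop i x <-> gclub (gamma e) i x).
Proof.
  intros Hi He Hx. split; [| intro; left; eauto].
  intros [[z [Hz Hzx]] | [_ [k [Hik [_ [_ ->]]]]]].
  - destruct (lt_total (gamma z) (gamma e)) as [Hlt | [Heq | Hgt]].
    + apply (active_coherent Hi He Hz Hlt). exact Hzx.
    + rewrite <- Heq. exact Hzx.
    + apply (active_coherent Hi Hz He Hgt). split; [exact Hzx | exact Hx].
  - exfalso. apply (le_not_lt (delta_ub He)).
    exact (le_lt_trans (delta_mono Hik) Hx).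
Qed.

Lemma Ctop_mono i j x : i <=. j -> j <. theta -> Ctop i x -> Ctop j x.
Proof.
  intros Hij Hj [[e [He Hx]] | [Hx [k [Hik [Hk [Hne ->]]]]]].
  - left. exists e. split; [exact (active_mono Hij He) |].
    exact (gclub_active_mono Hij Hj He Hx).
  - destruct (classic (j <=. k)) as [Hjk | Hkj%not_le_lt].
    + right. split; [exact Hx |]. exists k. auto.
    + destruct (delta_mono (lt_le_incl Hkj)) as [Hlt | Heq].
      * left. exact (delta_in_gclub (lt_le_incl Hkj) Hj Hne Hlt).
      * right. split; [exact Hx |]. exists j.
        split; [apply le_refl | split; [exact Hj | split; [| exact Heq]]].
        destruct Hne as [e He]. exists e. exact (active_mono (lt_le_incl Hkj) He).
Qed.

Lemma Ctop_beyond i m a : i <. theta -> i <=. m -> delta m <. a -> Ctop i a ->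
  exists k, m <. k /\ k <. theta /\ a = delta k.
Proof.
  intros Hi Him Hma [[e [He Ha]] | [_ [k [Hik [Hk [_ ->]]]]]].
  - exfalso. apply (lt_asymm Hma).
    exact (lt_le_trans (gclub_active_lt Hi He Ha) (le_trans (delta_ub He) (delta_mono Him))).
  - exists k. split; [| auto]. apply not_le_lt. intro Hkm.
    exact (le_not_lt (delta_mono Hkm) Hma).
Qed.

Lemma Ctop_agree_acc i e b : i <. theta -> active i e -> b <. gamma e ->
  is_acc lt (Ctop i) b -> is_acc lt (gclub (gamma e) i) b.
Proof.
  intros Hi He Hb. apply is_acc_restrict. intros x Hx. apply (Ctop_agree Hi He).
  exact (lt_trans Hx Hb).
Qed.

Lemma Ctop_acc_not_lt_least_delta i x k0 : i <. theta -> is_acc lt (Ctop i) x ->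
  (forall e, active i e -> ~ x <. gamma e) -> i <=. k0 -> k0 <. theta ->
  (forall k, i <=. k -> k <. theta -> x <=. delta k -> k0 <=. k) -> ~ x <. delta k0.
Proof.
  intros Hi Hacc Hbeyond Hik0 Hk0 Hmin Hlt. destruct (lt_delta Hlt) as [z [Hz Hxz]].
  destruct Hik0 as [Hik0 | <-]; [| exact (Hbeyond z Hz Hxz)].
  destruct (max_in (fun y => y <. k0) (proj1 Hz) (proj2 Hz)) as [m1 [Hm1 [Hzm1 Htm1]]].
  destruct (max_in (fun y => y <. k0) Hik0 Hm1) as [m [Hm [Him Hm1m]]].
  assert (Hz_active : forall k, m <. k -> active k z).
  { intros k Hmk. split; eauto using le_lt_trans, le_trans. }
  destruct (classic (exists k, m <. k /\ k <. k0)) as [[k [Hmk Hkk0]] | Hsucc].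
  - (* z is already active strictly between m and k0, contradicting the minimality of k0 *)
    refine (le_not_lt (Hmin k _ _ _) Hkk0); eauto using le_trans, lt_le_incl, lt_trans.
    exact (lt_le_incl (lt_le_trans Hxz (delta_ub (Hz_active k Hmk)))).
  - (* k0 is the successor of m: the points of Ctop i between delta m and x are delta k with
       k > m, hence k >= k0, hence above x *)
    assert (Hmx : delta m <. x).
    { apply not_le_lt. intro Hxm. exact (le_not_lt (Hmin m Him (lt_trans Hm Hk0) Hxm) Hm). }
    destruct (proj2 Hacc _ Hmx) as [a [Ha [Hma Hax]]].
    destruct (Ctop_beyond Hi Him Hma Ha) as [k [Hmk [_ ->]]].
    assert (Hk0k : k0 <=. k) by (apply not_lt_le; eauto).
    exact (lt_irrefl (lt_trans Hlt (le_lt_trans (delta_mono Hk0k) Hax))).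
Qed.

Lemma Ctop_closed i x : i <. theta -> x <. gsup -> is_acc lt (Ctop i) x -> Ctop i x.
Proof.
  intros Hi Hx Hacc. destruct (classic (exists e, active i e /\ x <. gamma e)) as [[e [He Hxe]] | Hn].
  - left. exists e. split; [exact He |].
    exact (proj2 (proj2 (gclub_active_club Hi He)) x Hxe (Ctop_agree_acc Hi He Hxe Hacc)).
  - destruct (well_founded_min (P := fun k => i <=. k /\ k <. theta /\ x <=. delta k))
      as [k0 [[Hik0 [Hk0 Hxk0]] Hmin]].
    { destruct (delta_above Hx Hi) as [k [? [? [_ ?]]]]. exists k. auto using lt_le_incl. }
    destruct Hxk0 as [Hlt | ->].
    + exfalso. refine (Ctop_acc_not_lt_least_delta Hi Hacc _ Hik0 Hk0 _ Hlt); eauto.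
    + right. split; [exact Hx |]. exists k0. repeat split; auto.
      apply NNPP. intro Hempty. destruct (proj1 Hacc) as [y Hy].
      assert (Hle : delta k0 <=. y) by (apply delta_least; intros e He; exfalso; eauto).
      exact (le_not_lt Hle Hy).
Qed.

(* itop is the stage from which on delta has reached gsup, if it ever does
   (which happens exactly when cf(gsup) < theta). *)
Definition itop :=
  least (fun k => k <. theta /\ (delta k = gsup \/ forall k', k' <. theta -> delta k' <> gsup)).

Lemma itop_spec : itop <. theta /\
  ((exists k, k <. theta /\ delta k = gsup) -> forall i, itop <=. i -> delta i = gsup).
Proof.
  destruct (least_spec (P := fun k => k <. theta /\
                                (delta k = gsup \/ forall k', k' <. theta -> delta k' <> gsup)))
    as [[Hlt Hcase] _].
  { destruct (classic (exists k, k <. theta /\ delta k = gsup)) as [[k [Hk E]] | Hn].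
    - exists k. auto.
    - destruct (theta_nonempty theta_regular) as [y Hy]. exists y. split; [exact Hy |].
      right. intros k' Hk' E. eauto. }
  split; [exact Hlt |]. intros [k [Hk E]] i Hi.
  destruct Hcase as [Hcase | Hnever]; [| exfalso; exact (Hnever k Hk E)].
  apply le_antisym; [apply delta_le_gsup |]. rewrite <- Hcase. exact (delta_mono Hi).
Qed.

Lemma Ctop_unbounded i : itop <=. i -> i <. theta -> unbounded_in lt (Ctop i) gsup.
Proof.
  intros Hti Hi x Hx. destruct (classic (exists k, k <. theta /\ delta k = gsup)) as [Hreach | Hn].
  - rewrite <- (proj2 itop_spec Hreach i Hti) in Hx.
    destruct (lt_delta Hx) as [e [He Hxe]].
    destruct (proj1 (proj2 (gclub_active_club Hi He)) x Hxe) as [a [Ha [Hxa Hae]]].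
    exists a. split; [left; eauto | split; [exact Hxa | exact (lt_trans Hae (gamma_lt_gsup e))]].
  - destruct (delta_above Hx Hi) as [k [Hik [Hk [Hne Hxk]]]].
    assert (Hkg : delta k <. gsup).
    { destruct (delta_le_gsup k) as [? | E]; [assumption | exfalso; eauto]. }
    exists (delta k). split; [right; split; [exact Hkg | eauto] | split; [left; exact Hxk | exact Hkg]].
Qed.

Lemma Ctop_club i : itop <=. i -> i <. theta -> club_in lt (Ctop i) gsup.
Proof.
  intros Hti Hi. split; [| split].
  - intro x. exact (Ctop_lt Hi).
  - exact (Ctop_unbounded Hti Hi).
  - intros x Hx. exact (Ctop_closed Hi Hx).
Qed.

Lemma Ctop_acc b : is_limit lt b -> b <. gsup ->
  exists i, itop <=. i /\ i <. theta /\ is_acc lt (Ctop i) b.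
Proof.
  intros Hb Hbg. destruct (lt_gsup Hbg) as [e [He Hbe]].
  destruct (gclub_acc (gamma_limit e) (gamma_lt_gsup e) Hb Hbe) as [i1 [Hi1 [Hi1t Hacc]]].
  destruct (max_in (fun y => y <. theta) Hi1t (proj1 itop_spec)) as [m [Hm [Hi1m Htm]]].
  destruct (active_above He Hm) as [i [Hact [Hmi Hi]]].
  exists i. split; [exact (le_trans Htm Hmi) | split; [exact Hi |]].
  apply (is_acc_mono (A := gclub (gamma e) i1)); [| exact Hacc].
  intros x Hx. left. exists e. split; [exact Hact |].
  exact (gclub_mono (gamma_limit e) (gamma_lt_gsup e) Hi1 (le_trans Hi1m Hmi) Hi Hx).
Qed.

Lemma Ctop_acc_beyond_cf_lt i b : i <. theta -> b <. gsup -> is_acc lt (Ctop i) b ->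
  (forall e, active i e -> gamma e <. b) -> cf_lt lt b theta.
Proof.
  intros Hi Hbg Hacc Hbeyond.
  assert (Hib : delta i <=. b) by (apply delta_least; intros e He; exact (lt_le_incl (Hbeyond e He))).
  destruct Hib as [Hib | Heq].
  - (* b is the supremum of the delta k for the stages k before the least one reaching b *)
    destruct (well_founded_min (P := fun k => i <=. k /\ k <. theta /\ b <=. delta k))
      as [k0 [[Hik0 [Hk0 Hbk0]] Hmin]].
    { destruct (delta_above Hbg Hi) as [k [? [? [_ ?]]]]. exists k. auto using lt_le_incl. }
    assert (Hbelow : forall k, i <=. k -> k <. k0 -> delta k <. b).
    { intros k Hik Hkk0. apply not_le_lt. intro Hbk.
      exact (le_not_lt (Hmin k (conj Hik (conj (lt_trans Hkk0 Hk0) Hbk))) Hkk0). }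
    apply (cf_lt_of_cofinal_family (c := k0) (fun k => i <=. k /\ k <. k0) delta Hk0).
    + intros k Hk. apply Hk.
    + exists i. split; [apply le_refl |]. destruct Hik0 as [? | <-]; [assumption |].
      exfalso. exact (le_not_lt Hbk0 Hib).
    + intros k Hk. apply Hbelow; apply Hk.
    + intros y Hy. destruct (max_in (fun z => z <. b) Hy Hib) as [m [Hm [Hym Him]]].
      destruct (proj2 Hacc m Hm) as [a [Ha [Hma Hab]]].
      destruct (Ctop_beyond Hi (le_refl i) (le_lt_trans Him Hma) Ha) as [k [Hik [_ ->]]].
      exists k. split; [split; [exact (lt_le_incl Hik) |] | exact (lt_le_incl (le_lt_trans Hym Hma))].
      apply not_le_lt. intro Hk0k. exact (le_not_lt (le_trans Hbk0 (delta_mono Hk0k)) Hab).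
  - (* b = delta i is the supremum of the gamma e for the fewer than theta active e *)
    subst b. apply (cf_lt_of_cofinal_family (c := i) (active i) gamma Hi).
    + intros e He. apply He.
    + destruct (proj1 Hacc) as [y Hy]. destruct (lt_delta Hy) as [e [He _]]. eauto.
    + exact Hbeyond.
    + intros y Hy. destruct (lt_delta Hy) as [e [He Hye]]. exists e. auto using lt_le_incl.
Qed.

Lemma Ctop_coherent_below_active i e b : i <. theta -> active i e -> b <=. gamma e ->
  is_acc lt (Ctop i) b -> ~ cf_lt lt b theta ->
  gidx b <=. i /\ forall x, gclub b i x <-> Ctop i x /\ x <. b.
Proof.
  intros Hi He [Hbe | ->] Hacc Hcf.
  - destruct (gclub_coherent_acc (gamma_limit e) (gamma_lt_gsup e) (gidx_le_active Hi He) Hi Hbe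
                (Ctop_agree_acc Hi He Hbe Hacc) Hcf) as [Hidx Hcoh].
    split; [exact Hidx |]. intro x. rewrite (Hcoh x).
    split; intros [Hx Hxb]; split; try exact Hxb; apply (Ctop_agree Hi He (lt_trans Hxb Hbe)); exact Hx.
  - split; [exact (gidx_le_active Hi He) |]. intro x. split.
    + intro Hx. split; [left; eauto | exact (gclub_active_lt Hi He Hx)].
    + intros [Hx Hxe]. exact (proj1 (Ctop_agree Hi He Hxe) Hx).
Qed.

Lemma Ctop_coherent_acc i b : i <. theta -> b <. gsup ->
  is_acc lt (Ctop i) b -> ~ cf_lt lt b theta ->
  gidx b <=. i /\ forall x, gclub b i x <-> Ctop i x /\ x <. b.
Proof.
  intros Hi Hbg Hacc Hcf. destruct (classic (exists e, active i e /\ b <=. gamma e)) as [[e [He Hbe]] | Hn].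
  - exact (Ctop_coherent_below_active Hi He Hbe Hacc Hcf).
  - exfalso. apply Hcf, (Ctop_acc_beyond_cf_lt Hi Hbg Hacc).
    intros e He. apply not_le_lt. intro Hbe. eauto.
Qed.

Lemma Ctop_coherent_eventually b : is_limit lt b -> b <. gsup ->
  exists i0, i0 <. theta /\ forall i, i0 <=. i -> i <. theta -> gidx b <=. i ->
    forall x, gclub b i x <-> Ctop i x /\ x <. b.
Proof.
  intros Hb Hbg. destruct (lt_gsup Hbg) as [e [He Hbe]].
  destruct (gclub_coherent_eventually (gamma_limit e) (gamma_lt_gsup e) Hb Hbe) as [i1 [Hi1 Hcoh]].
  destruct (active_above He Hi1) as [i0 [Hact [Hi1i0 Hi0]]].
  exists i0. split; [exact Hi0 |]. intros i Hi Ht Hib x.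
  assert (Hact_i : active i e) by exact (active_mono Hi Hact).
  rewrite (Hcoh i (le_trans Hi1i0 Hi) Ht (gidx_le_active Ht Hact_i) Hib x).
  split; intros [Hx Hxb]; split; try exact Hxb; apply (Ctop_agree Ht Hact_i (lt_trans Hxb Hbe)); exact Hx.
Qed.

Definition top_cond : cond K := mkCond gsup
  (fun a => if excluded_middle_informative (a = gsup) then itop else gidx a)
  (fun a i x => if excluded_middle_informative (a = gsup) then Ctop i x else gclub a i x).

Lemma top_cond_at_gsup : idx top_cond gsup = itop /\ clb top_cond gsup = Ctop.
Proof. simpl. now destruct excluded_middle_informative. Qed.

Lemma top_cond_below a : a <. gsup -> idx top_cond a = gidx a /\ clb top_cond a = gclub a.
Proof. intro Ha. simpl. destruct excluded_middle_informative as [-> | _]; [exfalso; exact (lt_irrefl Ha) | auto]. Qed.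

Lemma top_cond_clause2_below a : is_limit lt a -> a <. gsup ->
  (forall i j, gidx a <=. i -> i <=. j -> j <. theta -> forall x, gclub a i x -> gclub a j x) /\
  (forall i, gidx a <=. i -> i <. theta -> club_in lt (gclub a i) a) /\
  (forall b, (is_limit lt b /\ b <. a) <->
     exists i, gidx a <=. i /\ i <. theta /\ is_acc lt (gclub a i) b /\ b <. a).
Proof.
  intros Ha Hag. split; [intros i j Hi Hij Hj x; exact (gclub_mono Ha Hag Hi Hij Hj) |].
  split; [exact (gclub_club Ha Hag) |]. intro b. split.
  - intros [Hb Hba]. destruct (gclub_acc Ha Hag Hb Hba) as [i [? [? ?]]]. eauto.
  - intros [i [_ [_ [Hacc Hba]]]]. exact (conj (is_acc_limit Hacc) Hba).
Qed.

Lemma top_cond_clause2_top :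
  (forall i j, itop <=. i -> i <=. j -> j <. theta -> forall x, Ctop i x -> Ctop j x) /\
  (forall i, itop <=. i -> i <. theta -> club_in lt (Ctop i) gsup) /\
  (forall b, (is_limit lt b /\ b <. gsup) <->
     exists i, itop <=. i /\ i <. theta /\ is_acc lt (Ctop i) b /\ b <. gsup).
Proof.
  split; [intros i j _ Hij Hj x; exact (Ctop_mono Hij Hj) |].
  split; [exact Ctop_club |]. intro b. split.
  - intros [Hb Hbg]. destruct (Ctop_acc Hb Hbg) as [i [? [? ?]]]. eauto.
  - intros [i [_ [_ [Hacc Hbg]]]]. exact (conj (is_acc_limit Hacc) Hbg).
Qed.

Lemma top_cond_inP : inP lt theta top_cond.
Proof.
  pose proof top_cond_at_gsup as [Itop Ctop_eq].
  unfold inP, dom. simpl gam. split; [exact gsup_limit | split; [| split]].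
  - intros a [Ha [Hag | ->]].
    + destruct (top_cond_below Hag) as [-> ->].
      split; [exact (gidx_lt_theta Ha Hag) | exact (top_cond_clause2_below Ha Hag)].
    + rewrite Itop, Ctop_eq. split; [exact (proj1 itop_spec) | exact top_cond_clause2_top].
  - intros a i b [Ha Hag] Hi Ht Hba Hacc Hcf.
    destruct (top_cond_below (lt_le_trans Hba Hag)) as [-> ->].
    destruct Hag as [Hag | ->].
    + destruct (top_cond_below Hag) as [Ia Ca]. rewrite Ia in Hi. rewrite Ca in Hacc |- *.
      exact (gclub_coherent_acc Ha Hag Hi Ht Hba Hacc Hcf).
    + rewrite Ctop_eq in Hacc |- *. exact (Ctop_coherent_acc Ht Hba Hacc Hcf).
  - intros a b [Ha Hag] [Hb _] Hba.
    destruct (top_cond_below (lt_le_trans Hba Hag)) as [-> ->].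
    destruct Hag as [Hag | ->].
    + destruct (top_cond_below Hag) as [-> ->].
      exact (gclub_coherent_eventually Ha Hag Hb Hba).
    + rewrite Itop, Ctop_eq. destruct (Ctop_coherent_eventually Hb Hba) as [i0 [Hi0 Hcoh]].
      exists i0. split; [exact Hi0 |]. intros i Hi Ht _ Hib. exact (Hcoh i Hi Ht Hib).
Qed.

Lemma top_cond_ext p : D p -> ext lt theta top_cond p.
Proof.
  intro Hp. split; [exact (lt_le_incl (gam_lt_gsup Hp)) |]. intros a Hdom.
  destruct (top_cond_below (le_lt_trans (proj2 Hdom) (gam_lt_gsup Hp))) as [-> ->].
  exact (gsystem_agree Hp Hdom).
Qed.

End LowerBound.
End Ordinals.

Theorem lemma3p10 (K : Type) (lt : K -> K -> Prop) (theta : K)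
  (Hwo : is_wellorder lt)
  (Hkappa : kappa_regular_uncountable lt)
  (Htheta : regular_uncountable lt theta) :
  thetaplus_directed_closed lt theta.
Proof.
  intros D HD [g Hg].
  destruct (classic (exists p, D p)) as [[p0 Hp0] | Hempty].
  2: { destruct (inP_inhabited Hwo (theta_limit Hwo Htheta)) as [r Hr].
       exists r. split; [exact Hr | intros p Hp; exfalso; eauto]. }
  destruct (classic (exists p, D p /\ forall q, D q -> le lt (gam q) (gam p))) as [[p [Hp Hmax]] | Hnomax].
  - exists p. exact (directed_max_lower_bound Hwo HD p Hp Hmax).
  - destruct (enumerate_injective D g p0 Hg Hp0) as [pe [Hpe Honto]].
    assert (Hgrow : forall p, D p -> exists q, D q /\ lt (gam p) (gam q)).
    { intros p Hp. apply NNPP. intro Hn. apply Hnomax. exists p. split; [exact Hp |].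
      intros q Hq. apply (not_lt_le Hwo). eauto. }
    exists (top_cond lt (inhabits theta) theta D pe).
    split; [apply top_cond_inP | apply top_cond_ext]; assumption.
Qed.
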